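(* Let $\mathcal{X}\subseteq\mathbb{R}^d$ be nonempty, closed and convex, and let $f=\frac1n\sum_{i=1}^nf_i$ with each $f_i:\mathbb{R}^d\to\mathbb{R}$ convex and differentiable. Assume $x_\star\in\operatorname{arg\,min}_{x\in\mathcal{X}}f(x)$ exists and each $f_i$ has a constrained minimizer $x_{\star,i}\in\operatorname{arg\,min}_{x\in\mathcal{X}}f_i(x)$; let $f_i^\star:=f_i(x_{\star,i})$ and $D:=\max_{1\le i\le n}\|x_{\star,i}-x_\star\|$. Assume $\|\nabla f_i(x)\|\le G$ for all $i$ and all $x\in\mathcal{X}$. Let $x_0\in\mathcal{X}$ and generate $\{x_k\}$ by sampling $i_k$ uniformly from $\{1,\dots,n\}$ independently of the past, setting $g_{i_k}=\nabla f_{i_k}(x_k)$, $t_k:=\frac{f_{i_k}(x_k)-f_{i_k}^\star}{\|g_{i_k}\|}$ if $g_{i_k}\ne0$ and $t_k:=0$ if $g_{i_k}=0$, and $x_{k+1}\in\operatorname{arg\,min}_{z\in\mathcal{X}\cap\mathcal{B}(x_k,t_k)}\langle g_{i_k},z\rangle$. Then for every $\eta\in(0,1)$ and $K\ge1$, $$\frac1K\sum_{k=0}^{K-1}\mathbb{E}\big[(f(x_k)-f(x_\star))^2\big]\le\frac{G^2\|x_0-x_\star\|^2}{(1-\eta)K}+\frac{G^2D^2}{\eta(1-\eta)},$$ and for $\hat x_K:=\frac1K\sum_{k=0}^{K-1}x_k$, $\mathbb{E}[f(\hat x_K)-f(x_\star)]\le\sqrt{\frac{G^2\|x_0-x_\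star\|^2}{(1-\eta)K}+\frac{G^2D^2}{\eta(1-\eta)}}$.
   Context: $\|\cdot\|$ is the Euclidean norm, $\mathcal{B}(x,t):=\{y:\|y-x\|\le t\}$. *)

From HB Require Import structures.
From mathcomp Require Import all_boot all_order all_algebra.
From mathcomp Require Import all_classical all_reals all_analysis.
Set Implicit Arguments. Unset Strict Implicit. Unset Printing Implicit Defensive.
Import Order.TTheory GRing.Theory Num.Theory.
Import numFieldNormedType.Exports.
Local Open Scope classical_set_scope.
Local Open Scope ring_scope.

Definition dotp (R : realType) (d : nat) (u v : 'rV[R]_d) : R := (u *m v^T) 0 0.
Definition enorm (R : realType) (d : nat) (u : 'rV[R]_d) : R := Num.sqrt (dotp u u).

Definition eball (R : realType) (d : nat) (x : 'rV[R]_d) (t : R) : set 'rV[R]_d :=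
  [set y | enorm (y - x) <= t].

Definition convex_set_rV (R : realType) (d : nat) (X : set 'rV[R]_d) : Prop :=
  forall x y (a : R), X x -> X y -> 0 <= a <= 1 -> X (a *: x + (1 - a) *: y).

Definition convex_fun_rV (R : realType) (d : nat) (f : 'rV[R]_d -> R) : Prop :=
  forall x y (a : R), 0 <= a <= 1 ->
    f (a *: x + (1 - a) *: y) <= a * f x + (1 - a) * f y.

Definition is_gradient (R : realType) (d : nat) (f : 'rV[R]_d -> R)
  (g : 'rV[R]_d -> 'rV[R]_d) : Prop :=
  forall x, differentiable f x /\ ('d f x : 'rV[R]_d -> R) = (fun v => dotp (g x) v).

Definition is_argmin (R : realType) (d : nat) (h : 'rV[R]_d -> R) (S : set 'rV[R]_d)
  (x : 'rV[R]_d) : Prop :=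
  S x /\ forall y, S y -> h x <= h y.

Definition avgf (R : realType) (d n : nat) (fs : 'I_n -> 'rV[R]_d -> R) (x : 'rV[R]_d) : R :=
  n%:R^-1 * \sum_(i < n) fs i x.

Definition step_size (R : realType) (d n : nat) (fs : 'I_n -> 'rV[R]_d -> R)
  (gs : 'I_n -> 'rV[R]_d -> 'rV[R]_d) (xsi : 'I_n -> 'rV[R]_d) (i : 'I_n)
  (x : 'rV[R]_d) : R :=
  if gs i x == 0 then 0 else (fs i x - fs i (xsi i)) / enorm (gs i x).

(* A run of the algorithm: the iterate after the index history s = [i_0;...;i_{k-1}]
   is traj s. *)
Definition valid_run (R : realType) (d n : nat) (X : set 'rV[R]_d)
  (fs : 'I_n -> 'rV[R]_d -> R) (gs : 'I_n -> 'rV[R]_d -> 'rV[R]_d)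
  (xsi : 'I_n -> 'rV[R]_d) (x0 : 'rV[R]_d) (traj : seq 'I_n -> 'rV[R]_d) : Prop :=
  traj [::] = x0 /\
  forall (s : seq 'I_n) (i : 'I_n),
    is_argmin (fun z => dotp (gs i (traj s)) z)
      (X `&` eball (traj s) (step_size fs gs xsi i (traj s)))
      (traj (rcons s i)).

(* Expectation of a function of the first k sampled indices, when the indices
   are i.i.d. uniform on 'I_n: average over all k-tuples. *)
Definition expect_hist (R : realType) (n k : nat) (h : seq 'I_n -> R) : R :=
  (n ^ k)%:R^-1 * \sum_(s : k.-tuple 'I_n) h (tval s).

Definition avg_iterate (R : realType) (d n : nat) (traj : seq 'I_n -> 'rV[R]_d)
  (K : nat) (s : seq 'I_n) : 'rV[R]_d :=
  K%:R^-1 *: \sum_(k < K) traj (take k s).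

From HB Require Import structures.
From mathcomp Require Import all_boot all_order all_algebra.
From mathcomp Require Import all_classical all_reals all_analysis.
From mathcomp Require Import ring lra.
Import Order.TTheory GRing.Theory Num.Theory.
Import numFieldNormedType.Exports.
Local Open Scope classical_set_scope.
Local Open Scope ring_scope.

(* With the Polyak radius t = (f_i(x) - f_i^* ) / |g|, the minimizer x_{*,i} of the
   sampled f_i lies in the half-space <g, z - x> <= -t |g|, while the new iterate z
   minimizes <g, .> over X ∩ B(x, t).  Comparing z with the points of the segment
   [z, x_{*,i}] shows |z - x_{*,i}|^2 <= |x - x_{*,i}|^2 - t^2, and Young's inequality
   transfers this to x_star: |z - x_star|^2 <= |x - x_star|^2 - (1 - eta) t^2 + D^2 / eta.
   Since f_i(x) - f_i^* = t |g| <= G t, Cauchy-Schwarz gives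
   (f(x) - f(x_star))^2 <= G^2 * mean_i t_i^2, so averaging over i_k and telescoping
   yields the first bound; Jensen's inequality for f and for the square yields the
   second. *)

Set Implicit Arguments. Unset Strict Implicit.

Section InnerProduct.
Variables (R : realType) (d : nat).
Implicit Types (u v w : 'rV[R]_d) (a t : R).

Lemma dotpE u v : dotp u v = \sum_j u 0 j * v 0 j.
Proof. by rewrite /dotp !mxE; apply: eq_bigr => j _; rewrite mxE. Qed.

Lemma dotpC u v : dotp u v = dotp v u.
Proof. by rewrite !dotpE; apply: eq_bigr => j _; rewrite mulrC. Qed.

Lemma dotpDl u v w : dotp (u + v) w = dotp u w + dotp v w.
Proof. by rewrite !dotpE -big_split; apply: eq_bigr => j _; rewrite mxE mulrDl. Qed.

Lemma dotpZl a u v : dotp (a *: u) v = a * dotp u v.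
Proof. by rewrite !dotpE mulr_sumr; apply: eq_bigr => j _; rewrite mxE mulrA. Qed.

Lemma dotpNl u v : dotp (- u) v = - dotp u v.
Proof. by rewrite -scaleN1r dotpZl mulN1r. Qed.

Lemma dotpDr u v w : dotp u (v + w) = dotp u v + dotp u w.
Proof. by rewrite dotpC dotpDl !(dotpC u). Qed.

Lemma dotpZr a u v : dotp u (a *: v) = a * dotp u v.
Proof. by rewrite dotpC dotpZl dotpC. Qed.

Lemma dotpNr u v : dotp u (- v) = - dotp u v.
Proof. by rewrite dotpC dotpNl dotpC. Qed.

Lemma dotp0l v : dotp 0 v = 0.
Proof. by rewrite -(scale0r 0) dotpZl mul0r. Qed.

Lemma dotp_ge0 u : 0 <= dotp u u.
Proof. by rewrite dotpE; apply: sumr_ge0 => j _; rewrite -expr2 sqr_ge0. Qed.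

Lemma dotp_eq0 u : (dotp u u == 0) = (u == 0).
Proof.
apply/eqP/eqP => [|->]; last by rewrite dotp0l.
rewrite dotpE => /psumr_eq0P u0; apply/matrixP => i j; rewrite ord1 mxE.
by apply/eqP; rewrite -sqrf_eq0 expr2 u0 // => k _; rewrite -expr2 sqr_ge0.
Qed.

Lemma enorm_ge0 u : 0 <= enorm u.
Proof. exact: sqrtr_ge0. Qed.

Lemma sqr_enorm u : enorm u ^+ 2 = dotp u u.
Proof. by rewrite /enorm sqr_sqrtr // dotp_ge0. Qed.

Lemma enorm_eq0 u : (enorm u == 0) = (u == 0).
Proof. by rewrite -sqrf_eq0 sqr_enorm dotp_eq0. Qed.

Lemma enormN u : enorm (- u) = enorm u.
Proof. by rewrite /enorm dotpNl dotpNr opprK. Qed.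

Lemma enorm_le_sqr u t : 0 <= t -> (enorm u <= t) = (enorm u ^+ 2 <= t ^+ 2).
Proof. by move=> t0; rewrite ler_sqr // nnegrE enorm_ge0. Qed.

Lemma enormD_sqr u v :
  enorm (u + v) ^+ 2 = enorm u ^+ 2 + 2 * dotp u v + enorm v ^+ 2.
Proof. by rewrite !sqr_enorm dotpDl !dotpDr (dotpC v u); ring. Qed.

Lemma dotp_young u v (e : R) :
  0 < e -> 2 * dotp u v <= e * enorm u ^+ 2 + enorm v ^+ 2 / e.
Proof.
move=> e0; rewrite -(ler_pM2l e0) mulrDr [e * (_ / e)]mulrC divfK ?gt_eqF //.
have := dotp_ge0 (e *: u - v).
rewrite dotpDl !dotpDr !dotpNl !dotpNr !dotpZl !dotpZr (dotpC v u) -!sqr_enorm.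
lra.
Qed.

End InnerProduct.

Lemma convex_gradient_le (R : realType) (d : nat) (f : 'rV[R]_d -> R) g x y :
  convex_fun_rV f -> is_gradient f g -> f x + dotp (g x) (y - x) <= f y.
Proof.
move=> convf /(_ x) [dfx dfE].
have /cvg_ex [l quot_l] := @diff_derivable _ _ _ f x (y - x) dfx.
have Dl : 'D_(y - x) f x = l by exact: cvg_lim.
have -> : dotp (g x) (y - x) = l by rewrite -Dl deriveE // dfE.
suff : l <= f y - f x by lra.
(* by convexity, the difference quotients along [x, y] are at most f y - f x *)
apply: (cvgr_to_le (cvg_dnbhs_at_right quot_l)); near=> h.
have h0 : 0 < h by near: h; exact: nbhs_right_gt.
have h1 : h <= 1 by near: h; exact: nbhs_right_le.
rewrite /= -[_ *: _]/(_ * _) ler_pdivrMl //.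
have := convf y x h; rewrite (ltW h0) h1 => /(_ isT).
have -> : h *: y + (1 - h) *: x = h *: (y - x) + x.
  by apply/matrixP => i j; rewrite !mxE; ring.
lra.
Unshelve. all: by end_near.
Qed.

Section BallStep.
Variables (R : realType) (d : nat).
Implicit Types (X : set 'rV[R]_d) (g u v x y z : 'rV[R]_d) (t : R).

(* Equality case of Cauchy-Schwarz, stated without dividing by |g|. *)
Lemma steepest_in_ballE g u t :
  enorm u <= t -> t * enorm g <= - dotp g u -> enorm g *: u = - (t *: g).
Proof.
move=> ut tg; have t0 : 0 <= t := le_trans (enorm_ge0 u) ut.
rewrite enorm_le_sqr // in ut.
apply/eqP; rewrite -subr_eq0 opprK -dotp_eq0 eq_le dotp_ge0 andbT.
rewrite dotpDl !dotpDr !dotpZl !dotpZr (dotpC u g) -!sqr_enorm.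
have := ler_wpM2l (sqr_ge0 (enorm g)) ut.
have := ler_wpM2l (mulr_ge0 t0 (enorm_ge0 g)) tg.
nra.
Qed.

(* Moving from z a little toward y keeps us in the ball, so minimality of z
   forbids descent in the direction y - z. *)
Lemma ball_argmin_dotp_ge0 X g x y z t :
  convex_set_rV X -> X y -> is_argmin (dotp g) (X `&` eball x t) z ->
  enorm (z - x) ^+ 2 + 2 * dotp (z - x) (y - z) < t ^+ 2 ->
  0 <= dotp g (y - z).
Proof.
move=> convX Xy [[Xz zx] zmin]; set u := z - x; set v := y - z => inner.
have {}zx : enorm u <= t := zx.
have t0 : 0 <= t := le_trans (enorm_ge0 u) zx.
rewrite enorm_le_sqr // in zx.
pose de := t ^+ 2 - enorm u ^+ 2 - 2 * dotp u v.
have de0 : 0 < de by rewrite /de; lra.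
have v0 := sqr_ge0 (enorm v).
pose s := de / (enorm v ^+ 2 + de).
have s0 : 0 < s by rewrite divr_gt0 //; lra.
have s1 : s <= 1 by rewrite ler_pdivrMr ?mul1r; lra.
have sv : s * enorm v ^+ 2 <= de by rewrite mulrAC ler_pdivrMr; nra.
pose w := s *: y + (1 - s) *: z.
have wE : w = z + s *: v by apply/matrixP => i j; rewrite !mxE; ring.
have Xw : X w by apply: convX => //; rewrite (ltW s0) s1.
have w_ball : enorm (w - x) <= t.
  have -> : w - x = u + s *: v by rewrite wE addrAC.
  rewrite enorm_le_sqr // enormD_sqr dotpZr !sqr_enorm dotpZl dotpZr -!sqr_enorm.
  have near : enorm u ^+ 2 + 2 * dotp u v + s * enorm v ^+ 2 <= t ^+ 2.
    by rewrite /de in sv; lra.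
  have := ler_wpM2l (ltW s0) near.
  have s1' : 0 <= 1 - s by lra.
  have := ler_wpM2l s1' zx.
  lra.
have := zmin w (conj Xw w_ball); rewrite wE dotpDr dotpZr.
by rewrite -subr_ge0 addrC addKr pmulr_rge0.
Qed.

(* Otherwise z would be the steepest point x - t g / |g| of the ball, and then
   <g, y - z> = 0 would force equality. *)
Lemma ball_step_descent X g x y z t :
  convex_set_rV X -> X y -> g != 0 -> t * enorm g <= dotp g (x - y) ->
  is_argmin (dotp g) (X `&` eball x t) z ->
  enorm (z - y) ^+ 2 <= enorm (x - y) ^+ 2 - t ^+ 2.
Proof.
move=> convX Xy g0 tg zmin; have [[_ zx] _] := zmin.
have {}zx : enorm (z - x) <= t := zx.
have xyE : x - y = - ((z - x) + (y - z)) by rewrite [_ + (y - z)]addrC addrA subrK opprB.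
rewrite -opprB enormN xyE enormN enormD_sqr; rewrite xyE in tg.
set u := z - x; set v := y - z in zx tg *.
suff : t ^+ 2 <= enorm u ^+ 2 + 2 * dotp u v by lra.
rewrite leNgt; apply/negP => inner.
have gv := ball_argmin_dotp_ge0 convX Xy zmin inner.
rewrite dotpNr dotpDr in tg.
have ng0 : enorm g != 0 by rewrite enorm_eq0.
set c := t / enorm g.
have tE : t = c * enorm g by rewrite divfK.
have uE : u = - c *: g.
  apply: (scalerI ng0).
  rewrite /= (steepest_in_ballE zx); last lra.
  by rewrite scalerA mulrN [enorm g * c]mulrC -tE scaleNr.
have gu : dotp g u = - c * enorm g ^+ 2 by rewrite uE dotpZr sqr_enorm.
have uu : enorm u ^+ 2 = c ^+ 2 * enorm g ^+ 2.
  by rewrite uE sqr_enorm dotpZl dotpZr -sqr_enorm; ring.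
have uv : dotp u v = - c * dotp g v by rewrite uE dotpZl.
rewrite gu tE in tg.
have gv0 : dotp g v = 0 by lra.
by move: inner; rewrite uu uv gv0 tE; lra.
Qed.

End BallStep.

Lemma convex_fun_rV_avg (R : realType) (d : nat) (phi : 'rV[R]_d -> R)
    (p : nat -> 'rV[R]_d) (K : nat) :
  convex_fun_rV phi -> (0 < K)%N ->
  phi (K%:R^-1 *: \sum_(k < K) p k) <= K%:R^-1 * \sum_(k < K) phi (p k).
Proof.
move=> convp; elim: K => // K IH _.
have [->|K0] := posnP K; first by rewrite !big_ord1 invr1 scale1r mul1r.
rewrite !big_ord_recr /=.
move: (IH K0); move: (\sum_(i < K) p i) (\sum_(i < K) phi (p i)) => S F IHK.
have Kn0 : K%:R != 0 :> R by rewrite pnatr_eq0 -lt0n.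
have K1n0 : K.+1%:R != 0 :> R by rewrite pnatr_eq0.
pose a : R := K%:R / K.+1%:R.
have a01 : 0 <= a <= 1.
  by rewrite divr_ge0 ?ler0n //= ler_pdivrMr ?ltr0n // mul1r ler_nat.
have -> : K.+1%:R^-1 *: (S + p K) = a *: (K%:R^-1 *: S) + (1 - a) *: p K.
  by apply/matrixP => i j; rewrite !mxE /a -natr1; field; rewrite natr1 K1n0.
apply: le_trans (convp _ _ _ a01) _.
have -> : K.+1%:R^-1 * (F + phi (p K)) = a * (K%:R^-1 * F) + (1 - a) * phi (p K).
  by rewrite /a -natr1; field; rewrite natr1 K1n0.
by rewrite lerD2r ler_wpM2l //; case/andP: a01.
Qed.

Lemma convex_fun_rV_avgf (R : realType) (d n : nat) (fs : 'I_n -> 'rV[R]_d -> R) :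
  (forall i, convex_fun_rV (fs i)) -> convex_fun_rV (avgf fs).
Proof.
move=> convf x y a a01; rewrite /avgf mulrCA [(1 - a) * _]mulrCA -mulrDr.
rewrite ler_wpM2l ?invr_ge0 // !mulr_sumr -big_split /=.
by apply: ler_sum => i _; apply: convf.
Qed.

Lemma sqr_sum_le (R : realType) (I : finType) (a : I -> R) :
  (\sum_i a i) ^+ 2 <= #|I|%:R * \sum_i a i ^+ 2.
Proof.
have row i : \sum_j (a i - a j) ^+ 2
    = #|I|%:R * a i ^+ 2 + \sum_j a j ^+ 2 - 2 * (a i * \sum_j a j).
  rewrite (eq_bigr (fun j => a i ^+ 2 + a j ^+ 2 - 2 * (a i * a j))) => [|j _].
    by rewrite sumrB big_split /= sumr_const mulr_natl -!mulr_sumr.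
  by ring.
have : 0 <= \sum_i \sum_j (a i - a j) ^+ 2.
  by apply: sumr_ge0 => i _; apply: sumr_ge0 => j _; apply: sqr_ge0.
rewrite (eq_bigr _ (fun i _ => row i)) sumrB big_split /= sumr_const.
rewrite -[(\sum_j _) *+ _]mulr_natl -!mulr_sumr -mulr_suml expr2.
lra.
Qed.

Lemma sqr_avg_le (R : realType) (I : finType) (a : I -> R) :
  (#|I|%:R^-1 * \sum_i a i) ^+ 2 <= #|I|%:R^-1 * \sum_i a i ^+ 2.
Proof.
have [I0|I_gt0] := posnP #|I|.
  by rewrite I0 invr0 !mul0r expr0n.
have N0 : 0 < #|I|%:R :> R by rewrite ltr0n.
rewrite exprMn expr2 -mulrA ler_pM2l ?invr_gt0 // ler_pdivrMl //.
exact: sqr_sum_le.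
Qed.

Lemma big_tuple_rcons (V : nmodType) (T : finType) (k : nat) (h : seq T -> V) :
  \sum_(t : k.+1.-tuple T) h t = \sum_(t : k.-tuple T) \sum_(i : T) h (rcons t i).
Proof.
rewrite pair_big /=.
rewrite (reindex (fun p : k.-tuple T * T => [tuple of rcons p.1 p.2])) //.
exists (fun t : k.+1.-tuple T =>
          ([tuple of belast (thead t) (behead t)], last (thead t) (behead t))).
  move=> [[s sz] i] _; congr pair; last by case: s sz => [|a s] sz //=; rewrite last_rcons.
  by apply: val_inj; case: s sz => [|a s] sz //=; rewrite belast_rcons.
move=> [[|a s] sz] _; apply: val_inj => //=.
by rewrite -lastI.
Qed.

Lemma descent_sum_le (R : realType) (a b : nat -> R) (c r : R) (K : nat) :
  (forall k, a k.+1 <= a k - c * b k + r) -> 0 <= a K ->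
  c * \sum_(k < K) b k <= a 0%N + K%:R * r.
Proof.
move=> descent aK0; suff : a K + c * \sum_(k < K) b k <= a 0%N + K%:R * r by lra.
elim: K {aK0} => [|K IH]; first by rewrite big_ord0 mulr0 mul0r !addr0.
by rewrite big_ord_recr /= -natr1; have := descent K; lra.
Qed.

Section ExpectHist.
Variables (R : realType) (n : nat).
Implicit Types (h : seq 'I_n -> R) (k : nat).

Lemma ler_expect_hist k h1 h2 :
  (forall t : k.-tuple 'I_n, h1 t <= h2 t) -> expect_hist k h1 <= expect_hist k h2.
Proof. by move=> le12; rewrite ler_wpM2l ?invr_ge0 //; apply: ler_sum. Qed.

Lemma expect_hist_ge0 k h :
  (forall t : k.-tuple 'I_n, 0 <= h t) -> 0 <= expect_hist k h.
Proof. by move=> h0; rewrite mulr_ge0 ?invr_ge0 ?sumr_ge0. Qed.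

Lemma expect_histD k h1 h2 :
  expect_hist k (fun s => h1 s + h2 s) = expect_hist k h1 + expect_hist k h2.
Proof. by rewrite /expect_hist big_split mulrDr. Qed.

Lemma expect_histB k h1 h2 :
  expect_hist k (fun s => h1 s - h2 s) = expect_hist k h1 - expect_hist k h2.
Proof. by rewrite /expect_hist sumrB mulrBr. Qed.

Lemma expect_histMl k a h :
  expect_hist k (fun s => a * h s) = a * expect_hist k h.
Proof. by rewrite /expect_hist -mulr_sumr mulrCA. Qed.

Lemma expect_hist_sum k K (F : 'I_K -> seq 'I_n -> R) :
  expect_hist k (fun s => \sum_(j < K) F j s) = \sum_(j < K) expect_hist k (F j).
Proof. by rewrite /expect_hist exchange_big mulr_sumr. Qed.

Lemma expect_hist0 h : expect_hist 0 h = h [::].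
Proof.
rewrite /expect_hist expn0 invr1 mul1r (eq_bigr (fun _ => h [::])).
  by rewrite sumr_const card_tuple expn0.
by move=> t _; rewrite tuple0.
Qed.

Lemma expect_hist_rcons k h :
  expect_hist k.+1 h = expect_hist k (fun s => n%:R^-1 * \sum_(i < n) h (rcons s i)).
Proof.
rewrite /expect_hist big_tuple_rcons -mulr_sumr expnS natrM invfM.
by rewrite mulrA [_^-1 * _^-1]mulrC.
Qed.

Lemma expect_hist_sqr_le k h : expect_hist k h ^+ 2 <= expect_hist k (fun s => h s ^+ 2).
Proof. by have := sqr_avg_le (fun t : k.-tuple 'I_n => h t); rewrite card_tuple card_ord. Qed.

Hypothesis n_gt0 : (0 < n)%N.

Lemma expect_hist_cst k (c : R) : expect_hist k (fun _ : seq 'I_n => c) = c.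
Proof.
rewrite /expect_hist sumr_const card_tuple card_ord -[c *+ _]mulr_natl mulKf //.
by rewrite pnatr_eq0 -lt0n expn_gt0 n_gt0.
Qed.

Lemma expect_hist_take k j h :
  expect_hist (k + j) (fun s => h (take k s)) = expect_hist k h.
Proof.
elim: j => [|j IH].
  rewrite addn0; congr (_ * _); apply: eq_bigr => t _.
  by rewrite take_oversize // size_tuple.
rewrite addnS expect_hist_rcons -IH; congr (_ * _); apply: eq_bigr => t _.
rewrite (eq_bigr (fun _ => h (take k t))) => [|i _]; last first.
  by rewrite -cats1 takel_cat // size_tuple leq_addr.
by rewrite sumr_const card_ord -[h _ *+ _]mulr_natl mulKf // pnatr_eq0 -lt0n.
Qed.

Lemma expect_hist_mean_take K h :
  expect_hist K (fun s => K%:R^-1 * \sum_(k < K) h (take k s))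
  = K%:R^-1 * \sum_(k < K) expect_hist k h.
Proof.
rewrite expect_histMl expect_hist_sum; congr (_ * _); apply: eq_bigr => k _.
by have := expect_hist_take k (K - k) h; rewrite subnKC // ltnW.
Qed.

End ExpectHist.

Section PolyakRun.
Variables (R : realType) (d n : nat) (X : set 'rV[R]_d).
Variables (fs : 'I_n -> 'rV[R]_d -> R) (gs : 'I_n -> 'rV[R]_d -> 'rV[R]_d).
Variables (xsi : 'I_n -> 'rV[R]_d) (G : R).
Hypothesis convX : convex_set_rV X.
Hypothesis convf : forall i, convex_fun_rV (fs i).
Hypothesis gradf : forall i, is_gradient (fs i) (gs i).
Hypothesis xsi_min : forall i, is_argmin (fs i) X (xsi i).
Hypothesis gradG : forall i x, X x -> enorm (gs i x) <= G.

Local Notation step := (step_size fs gs xsi).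

Lemma step_size_ge0 i x : X x -> 0 <= step i x.
Proof.
move=> Xx; rewrite /step_size; case: eqP => // _.
by rewrite divr_ge0 ?enorm_ge0 // subr_ge0 (xsi_min i).2.
Qed.

Lemma step_size_mul_enorm i x : X x -> step i x * enorm (gs i x) = fs i x - fs i (xsi i).
Proof.
move=> Xx; rewrite /step_size; case: eqP => [g0|/eqP g0]; last first.
  by rewrite divfK // enorm_eq0.
have := convex_gradient_le x (xsi i) (convf i) (gradf i).
have := (xsi_min i).2 x Xx.
rewrite g0 dotp0l mul0r; lra.
Qed.

Lemma step_size_le_dotp i x : X x -> step i x * enorm (gs i x) <= dotp (gs i x) (x - xsi i).
Proof.
move=> Xx; rewrite step_size_mul_enorm // -[x - _]opprB dotpNr.
by have := convex_gradient_le x (xsi i) (convf i) (gradf i); lra.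
Qed.

Lemma step_descent i x z xs eta : X x -> 0 < eta ->
  is_argmin (dotp (gs i x)) (X `&` eball x (step i x)) z ->
  enorm (z - xs) ^+ 2
  <= enorm (x - xs) ^+ 2 - (1 - eta) * step i x ^+ 2 + enorm (xsi i - xs) ^+ 2 / eta.
Proof.
move=> Xx eta0 zmin; have [[_ zx] _] := zmin.
have {}zx : enorm (z - x) <= step i x := zx.
set t := step i x in zx zmin *; set y := xsi i.
have t0 : 0 <= t := step_size_ge0 i Xx.
have closer : enorm (z - y) ^+ 2 <= enorm (x - y) ^+ 2 - t ^+ 2.
  have [g0|g0] := eqVneq (gs i x) 0; last first.
    exact: ball_step_descent convX (xsi_min i).1 g0 (step_size_le_dotp i Xx) zmin.
  have t_eq0 : t = 0 by rewrite /t /step_size g0 eqxx.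
  rewrite t_eq0 in zx; rewrite t_eq0 expr0n subr0.
  have : enorm (z - x) == 0 by rewrite eq_le zx enorm_ge0.
  by rewrite enorm_eq0 subr_eq0 => /eqP->.
rewrite enorm_le_sqr // in zx.
have := ler_wpM2l (ltW eta0) zx.
have := dotp_young (z - x) (y - xs) eta0.
have splitE u : enorm (u - xs) ^+ 2
    = enorm (u - y) ^+ 2 + 2 * dotp (u - y) (y - xs) + enorm (y - xs) ^+ 2.
  by rewrite -enormD_sqr addrA subrK.
rewrite (splitE z) (splitE x).
have -> : dotp (z - y) (y - xs) = dotp (z - x) (y - xs) + dotp (x - y) (y - xs).
  by rewrite -dotpDl addrA subrK.
lra.
Qed.

Lemma gap_sqr_le x xs : X x -> is_argmin (avgf fs) X xs ->
  (avgf fs x - avgf fs xs) ^+ 2 <= G ^+ 2 * (n%:R^-1 * \sum_(i < n) step i x ^+ 2).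
Proof.
move=> Xx [Xxs xs_min].
have gap0 : 0 <= avgf fs x - avgf fs xs by rewrite subr_ge0 xs_min.
have gap_le : avgf fs x - avgf fs xs <= n%:R^-1 * \sum_(i < n) (fs i x - fs i (xsi i)).
  rewrite /avgf -mulrBr -sumrB ler_wpM2l ?invr_ge0 //.
  by apply: ler_sum => i _; rewrite lerD2l lerN2 (xsi_min i).2.
apply: le_trans (_ : (n%:R^-1 * \sum_(i < n) (fs i x - fs i (xsi i))) ^+ 2 <= _).
  by rewrite ler_sqr // nnegrE (le_trans gap0).
have := sqr_avg_le (fun i => fs i x - fs i (xsi i)); rewrite card_ord => /le_trans; apply.
rewrite mulrCA; apply: ler_wpM2l; first by rewrite invr_ge0.
rewrite mulr_sumr; apply: ler_sum => i _.
have G0 : 0 <= G := le_trans (enorm_ge0 _) (gradG i Xx).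
rewrite -step_size_mul_enorm // exprMn mulrC; apply: ler_wpM2r; first exact: sqr_ge0.
by rewrite ler_sqr ?nnegrE ?enorm_ge0 ?gradG.
Qed.

Variables (x0 : 'rV[R]_d) (traj : seq 'I_n -> 'rV[R]_d).
Hypothesis run : valid_run X fs gs xsi x0 traj.
Hypothesis Xx0 : X x0.
Hypothesis n_gt0 : (0 < n)%N.

Lemma valid_run_in s : X (traj s).
Proof.
case: run => [traj0 traj_step]; elim/last_ind: s => [|s i _]; first by rewrite traj0.
by case: (traj_step s i) => [[]].
Qed.

Lemma expect_descent xs eta Dm k : 0 < eta ->
  (forall i, enorm (xsi i - xs) <= Dm) ->
  expect_hist k.+1 (fun s => enorm (traj s - xs) ^+ 2)
  <= expect_hist k (fun s => enorm (traj s - xs) ^+ 2)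
     - (1 - eta) * expect_hist k (fun s => n%:R^-1 * \sum_(i < n) step i (traj s) ^+ 2)
     + Dm ^+ 2 / eta.
Proof.
move=> eta0 Dm_ge; set T := fun s => n%:R^-1 * \sum_(i < n) _.
apply: (@le_trans _ _ (expect_hist k (fun s =>
  enorm (traj s - xs) ^+ 2 - (1 - eta) * T s + Dm ^+ 2 / eta))); last first.
  by rewrite expect_histD expect_histB expect_histMl expect_hist_cst.
rewrite expect_hist_rcons; apply: ler_expect_hist => s.
apply: le_trans (_ : n%:R^-1 * \sum_(i < n)
  (enorm (traj s - xs) ^+ 2 - (1 - eta) * step i (traj s) ^+ 2 + Dm ^+ 2 / eta) <= _).
  apply: ler_wpM2l; first by rewrite invr_ge0.
  apply: ler_sum => i _.
  apply: le_trans (step_descent xs (valid_run_in s) eta0 (run.2 s i)) _.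
  rewrite lerD2l; apply: ler_wpM2r; first by rewrite invr_ge0 ltW.
  have D0 : 0 <= Dm := le_trans (enorm_ge0 _) (Dm_ge i).
  by rewrite ler_sqr ?nnegrE ?enorm_ge0.
have n0 : n%:R != 0 :> R by rewrite pnatr_eq0 -lt0n.
rewrite big_split sumrB /= !sumr_const card_ord -mulr_sumr /T.
rewrite -[enorm _ ^+ 2 *+ n]mulr_natl -[(Dm ^+ 2 / eta) *+ n]mulr_natl.
by rewrite le_eqVlt; apply/orP; left; apply/eqP; field; rewrite n0 (gt_eqF eta0).
Qed.

Lemma mean_expect_gap_sqr_le xs eta Dm K :
  is_argmin (avgf fs) X xs -> 0 < eta < 1 -> (0 < K)%N ->
  (forall i, enorm (xsi i - xs) <= Dm) ->
  K%:R^-1 * \sum_(k < K) expect_hist k (fun s => (avgf fs (traj s) - avgf fs xs) ^+ 2)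
  <= G ^+ 2 * enorm (x0 - xs) ^+ 2 / ((1 - eta) * K%:R)
     + G ^+ 2 * Dm ^+ 2 / (eta * (1 - eta)).
Proof.
move=> xs_min /andP[eta0 eta1] K_gt0 Dm_ge.
set W := fun s => enorm (traj s - xs) ^+ 2.
set T := fun s => n%:R^-1 * \sum_(i < n) step i (traj s) ^+ 2.
have gapT k : expect_hist k (fun s => (avgf fs (traj s) - avgf fs xs) ^+ 2)
    <= G ^+ 2 * expect_hist k T.
  rewrite -expect_histMl; apply: ler_expect_hist => s.
  exact: gap_sqr_le (valid_run_in s) xs_min.
have sumT : (1 - eta) * \sum_(k < K) expect_hist k T
    <= enorm (x0 - xs) ^+ 2 + K%:R * (Dm ^+ 2 / eta).
  have := descent_sum_le (a := fun k => expect_hist k W) (b := fun k => expect_hist k T)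
    (fun k => expect_descent k eta0 Dm_ge) (expect_hist_ge0 (fun t => sqr_ge0 _)).
  by rewrite expect_hist0 /W run.1.
apply: le_trans (_ : K%:R^-1 * (G ^+ 2 * \sum_(k < K) expect_hist k T) <= _).
  rewrite [G ^+ 2 * _]mulr_sumr; apply: ler_wpM2l; first by rewrite invr_ge0.
  by apply: ler_sum => k _.
have KN : K%:R != 0 :> R by rewrite pnatr_eq0 -lt0n.
rewrite [X in _ <= X](_ : _ = K%:R^-1 * (G ^+ 2 *
    ((enorm (x0 - xs) ^+ 2 + K%:R * (Dm ^+ 2 / eta)) / (1 - eta)))); last first.
  by field; rewrite KN (gt_eqF eta0) subr_eq0 (gt_eqF eta1).
apply: ler_wpM2l; first by rewrite invr_ge0.
apply: ler_wpM2l; first exact: sqr_ge0.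
by rewrite ler_pdivlMr ?subr_gt0 // mulrC.
Qed.

Lemma expect_avg_iterate_gap_le xs K :
  is_argmin (avgf fs) X xs -> (0 < K)%N ->
  expect_hist K (fun s => avgf fs (avg_iterate traj K s) - avgf fs xs)
  <= Num.sqrt (K%:R^-1 * \sum_(k < K)
       expect_hist k (fun s => (avgf fs (traj s) - avgf fs xs) ^+ 2)).
Proof.
move=> [_ xs_min] K_gt0.
set e := fun s => avgf fs (traj s) - avgf fs xs.
have e0 s : 0 <= e s by rewrite subr_ge0; apply/xs_min/valid_run_in.
have jensen s : avgf fs (avg_iterate traj K s) - avgf fs xs
    <= K%:R^-1 * \sum_(k < K) e (take k s).
  have KN : K%:R != 0 :> R by rewrite pnatr_eq0 -lt0n.
  rewrite /e sumrB sumr_const card_ord mulrBr -[avgf fs xs *+ K]mulr_natl mulKf //.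
  rewrite lerD2r /avg_iterate.
  exact: (convex_fun_rV_avg (fun k => traj (take k s)) (convex_fun_rV_avgf convf) K_gt0).
pose Y s := K%:R^-1 * \sum_(k < K) e (take k s).
apply: (@le_trans _ _ (expect_hist K Y)); first by apply: ler_expect_hist => t; apply: jensen.
have sqrt_ub (a b : R) : 0 <= a -> a ^+ 2 <= b -> a <= Num.sqrt b.
  move=> a0 ab; rewrite -(ger0_norm a0) -sqrtr_sqr ler_sqrt //.
  exact: le_trans (sqr_ge0 a) ab.
apply: sqrt_ub; last first.
  apply: le_trans (expect_hist_sqr_le _ _) _.
  rewrite -expect_hist_mean_take //; apply: ler_expect_hist => t.
  by have := sqr_avg_le (fun k : 'I_K => e (take k t)); rewrite card_ord.
by apply: expect_hist_ge0 => t; rewrite mulr_ge0 ?invr_ge0 ?sumr_ge0.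
Qed.

End PolyakRun.

Unset Implicit Arguments. Set Strict Implicit.

Theorem theorem11 (R : realType) (d n : nat) (X : set 'rV[R]_d)
  (fs : 'I_n -> 'rV[R]_d -> R) (gs : 'I_n -> 'rV[R]_d -> 'rV[R]_d)
  (xstar : 'rV[R]_d) (xsi : 'I_n -> 'rV[R]_d) (G : R) (x0 : 'rV[R]_d)
  (traj : seq 'I_n -> 'rV[R]_d) (eta : R) (K : nat) :
  (0 < n)%N ->
  X !=set0 -> closed X -> convex_set_rV X ->
  (forall i, convex_fun_rV (fs i)) ->
  (forall i, is_gradient (fs i) (gs i)) ->
  is_argmin (avgf fs) X xstar ->
  (forall i, is_argmin (fs i) X (xsi i)) ->
  (forall i x, X x -> enorm (gs i x) <= G) ->
  X x0 ->
  valid_run X fs gs xsi x0 traj ->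
  0 < eta < 1 -> (1 <= K)%N ->
  let D := \big[Num.max/0]_(i < n) enorm (xsi i - xstar) in
  let bound := G ^+ 2 * enorm (x0 - xstar) ^+ 2 / ((1 - eta) * K%:R)
               + G ^+ 2 * D ^+ 2 / (eta * (1 - eta)) in
  K%:R^-1 * \sum_(k < K)
      expect_hist k (fun s => (avgf fs (traj s) - avgf fs xstar) ^+ 2) <= bound
  /\
  expect_hist K (fun s => avgf fs (avg_iterate traj K s) - avgf fs xstar)
    <= Num.sqrt bound.
Proof.
(* Closedness and nonemptiness of X only guarantee that the minimizers exist;
   here they are given. *)
move=> n_gt0 _ _ convX convf gradf xs_min xsi_min gradG Xx0 run eta01 K_gt0 D bound.
have Dmax i : enorm (xsi i - xstar) <= D.
  exact: le_bigmax (fun j => enorm (xsi j - xstar)) i.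
have mean_gap := mean_expect_gap_sqr_le convX convf gradf xsi_min gradG run Xx0
  n_gt0 xs_min eta01 K_gt0 Dmax.
split=> //; apply: le_trans (expect_avg_iterate_gap_le convf run Xx0 n_gt0 xs_min K_gt0) _.
by rewrite ler_sqrt // (le_trans _ mean_gap) // mulr_ge0 ?invr_ge0 ?sumr_ge0 //
  => k _; apply: expect_hist_ge0 => t; apply: sqr_ge0.
Qed.
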